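(* Let $f\in D$ and let $x\in V\setminus D$ with $l(x)\ge l(f)$. If there is a path $P$ in $G$ between $x$ and $f$ that contains no vertex of $D$ other than $f$, then there is a vertex $w\in V(H)$ such that $\delta_{G-D}(x,w)\le(2k-1)|P|$.
   Context: $G=(V,E)$ is an undirected graph with $n\ge3$ vertices and real edge weights in $[1,W]$; shortest paths in every subgraph are assumed unique; $\delta_{G'}$ denotes distance in a graph $G'$, $|P|$ the weighted length of a path $P$, and $G-R$ the graph with the vertex set $R$ deleted. Let $k=\ln n$. For $R\subseteq V$, $S\subseteq V\setminus R$, an $S$-restricted tree cover of $G-R$ is a family $\{T(w):w\in S\}$ of trees, $T(w)$ a subtree of $G-R$ rooted at $w$, such that (i) for all $u\in S$, $v\in V\setminus R$ there is $w\in S$ with $u,v\in V(T(w))$ and $\mathrm{dep}_{T(w)}(u)+\mathrm{dep}_{T(w)}(v)\le(2k-1)\delta_{G-R}(u,v)$ ($\mathrm{dep}_T(x)$ = weighted distance from $x$ to the root); (ii) each vertex lies in at most $kn^{1/k}(\ln n+1)$ trees. A vertex of such a tree $T$ is a trunk vertex if it lies on the $T$-path between two vertices of $S$; $\mathrm{Trunk}(T)$ is the subtree induced by trunk vertices; $\mathrm{pdeg}_T(v)$ is the degree of $v$ in $\mathrm{Trunk}(T)$ (0 if not trunk). Fix an integer $d\ge2$, a constant $c\ge1$, $s=4e d^{c+1}\ln^2 n+1$; $\mathrm{Hi}(\mathcal{C})$ is the set of vertices of pseudo-degree $>s$ in some tree of a tree cover $\mathcal{C}$. Fixed tree covers: $\mathcal{T}(S)$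 ($S$-restricted, of $G$) and $\mathcal{T}_R(S)$ ($(S\setminus R)$-restricted, of $G-R$), with $\mathcal{T}_\varnothing(S)=\mathcal{T}(S)$. Hierarchy tree: root $V$; a node $U$ is a leaf if $\mathrm{Hi}(\mathcal{T}(U))=\varnothing$, else it has children $W_1=\mathrm{Hi}(\mathcal{T}(U))$, $W_i=W_{i-1}\cup\mathrm{Hi}(\mathcal{T}_{W_{i-1}}(U))$ ($2\le i\le d$), recursively. Let $D\subseteq V$, $|D|\le d$, be the set of failed vertices, and fix a root-to-node path $V=U_1,U_2,\dots,U_p$ in the hierarchy tree, with $U_{p+1}=\varnothing$, such that every $f\in D$ has pseudo-degree at most $s$ in every tree of $\mathcal{T}:=\bigcup_{i=1}^p\mathcal{T}_{U_{i+1}}(U_i)$. The level $l(v)$ of $v\in V$ is the largest $l$ with $v\in U_l$. Let $s_0,t_0\in V\setminus D$ be two query vertices. For $f\in D$ and $T\in\mathcal{T}$ with $f\in V(T)$, let $N_T(f)=\{\mathrm{parent}_T(f)\}\cup(\mathrm{children}_T(f)\cap\mathrm{Trunk}(T))$ (the parent term omitted if $f$ is the root), $N(f)=\bigcup_{T\in\mathcal{T},\,f\in V(T)}N_T(f)$, and $V(H)=\big(\{s_0,t_0\}\cup\bigcup_{f\in D}N(f)\big)\setminus D$. *)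

From HB Require Import structures.
From mathcomp Require Import all_boot all_order all_algebra.
From mathcomp Require Import all_classical all_reals.
From mathcomp Require Import ereal sequences exp.
Set Implicit Arguments. Unset Strict Implicit. Unset Printing Implicit Defensive.
Import Order.TTheory GRing.Theory Num.Theory.
Local Open Scope ring_scope.

Section Defs.
Variables (R : realType) (V : finType).

(** The graph: a symmetric irreflexive edge relation [E] and a weight
    function [wt] (only its values on edges matter). *)

Fixpoint wlen (wt : V -> V -> R) (u : V) (p : seq V) : R :=
  if p is v :: p' then wt u v + wlen wt v p' else 0.

(** [p] describes a walk [u :: p] in G - Rm from u to v *)
Definition walk_in (E : rel V) (Rm : {set V}) (u v : V) (p : seq V) : Prop :=
  [/\ path E u p, last u p = v & all (fun y => y \notin Rm) (u :: p)].

Definition spath_in (E : rel V) (Rm : {set V}) (u v : V) (p : seq V) : Prop :=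
  walk_in E Rm u v p /\ uniq (u :: p).

(** delta_{G - Rm}(u, v), in the extended reals (+oo if disconnected) *)
Definition dist (E : rel V) (wt : V -> V -> R) (Rm : {set V}) (u v : V)
  : \bar R :=
  ereal_inf [set ((wlen wt u p)%:E) | p in [set p | walk_in E Rm u v p]].

Definition kk : R := ln (#|V|%:R).

(** A rooted tree, given by vertex set, root and parent function
    (the parent function matters only on non-root tree vertices). *)
Record rtree := RTree { tv : {set V}; troot : V; tpar : V -> V }.

Definition is_subtree (E : rel V) (Rm : {set V}) (w : V) (T : rtree) : Prop :=
  [/\ troot T = w, w \in tv T, tv T \subset ~: Rm,
      (forall v, v \in tv T -> v != w -> tpar T v \in tv T /\ E v (tpar T v))
    & (forall v, v \in tv T -> exists i, iter i (tpar T) v = w)].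

Definition hgt (T : rtree) (v : V) : nat :=
  find (fun i => iter i (tpar T) v == troot T) (iota 0 #|V|).

Definition dep (wt : V -> V -> R) (T : rtree) (v : V) : R :=
  \sum_(i < hgt T v) wt (iter i (tpar T) v) (iter i.+1 (tpar T) v).

Definition tadj (T : rtree) : rel V := fun x y =>
  [&& x \in tv T, y \in tv T &
      ((x != troot T) && (tpar T x == y)) || ((y != troot T) && (tpar T y == x))].

Definition trunk (S : {set V}) (T : rtree) (v : V) : bool :=
  `[< exists a b (p : seq V),
        [/\ [&& a \in S, b \in S, a \in tv T & b \in tv T],
            path (tadj T) a p, last a p = b, uniq (a :: p)
          & v \in a :: p] >].

Definition pdeg (S : {set V}) (T : rtree) (v : V) : nat :=
  if trunk S T v then #|[set y | tadj T v y && trunk S T y]| else 0.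

Definition tree_cover (E : rel V) (wt : V -> V -> R) (Rm S : {set V})
    (C : V -> rtree) : Prop :=
  [/\ (forall w, w \in S -> is_subtree E Rm w (C w)),
      (forall u v, u \in S -> v \notin Rm ->
         (dist E wt Rm u v < +oo)%E ->
         exists2 w, w \in S &
           [/\ u \in tv (C w), v \in tv (C w) &
               ((dep wt (C w) u + dep wt (C w) v)%:E
                  <= ((2 * kk - 1)%:E * dist E wt Rm u v))%E])
    & (forall v, (#|[set w in S | v \in tv (C w)]|%:R : R)
                 <= kk * (#|V|%:R `^ (kk^-1)) * (ln (#|V|%:R) + 1))].

Definition sth (d : nat) (c : R) : R :=
  4 * expR 1 * (d%:R `^ (c + 1)) * (ln (#|V|%:R)) ^+ 2 + 1.

(** The family of tree covers: [TC Rm S] is T_Rm(S), whose trees are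
    [TC Rm S w] for w in S :\: Rm; T(S) = T_set0(S). *)

Definition Hi (s : R) (TC : {set V} -> {set V} -> V -> rtree)
    (Rm S : {set V}) : {set V} :=
  [set v | [exists w in S :\: Rm, s < (pdeg (S :\: Rm) (TC Rm S w) v)%:R]].

Fixpoint Wc (s : R) TC (U : {set V}) (i : nat) : {set V} :=
  match i with
  | 0 => finset.set0 (* unused *)
  | 1 => Hi s TC finset.set0 U
  | i'.+1 => Wc s TC U i' :|: Hi s TC (Wc s TC U i') U
  end.

Definition hchild (s : R) TC (d : nat) (U U' : {set V}) : Prop :=
  Hi s TC finset.set0 U != finset.set0 /\ exists2 i, (1 <= i <= d)%N & U' = Wc s TC U i.

Definition lvl (U : nat -> {set V}) (p : nat) (v : V) : nat :=
  \max_(1 <= l < p.+1 | v \in U l) l.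

Definition NT (S : {set V}) (T : rtree) (f : V) : {set V} :=
  (if f != troot T then [set tpar T f] else finset.set0) :|:
  [set y | [&& y \in tv T, y != troot T, tpar T y == f & trunk S T y]].

Definition Nf TC (U : nat -> {set V}) (p : nat) (f : V) : {set V} :=
  \bigcup_(i < p.+1 | (1 <= i)%N)
    \bigcup_(w in U i :\: U i.+1 | f \in tv (TC (U i.+1) (U i) w))
       NT (U i :\: U i.+1) (TC (U i.+1) (U i) w) f.

Definition VH TC (U : nat -> {set V}) (p : nat) (D : {set V}) (s0 t0 : V)
  : {set V} :=
  ([set s0; t0] :|: \bigcup_(f in D) Nf TC U p f) :\: D.

End Defs.

From HB Require Import structures.
From mathcomp Require Import all_boot all_order all_algebra.
From mathcomp Require Import all_classical all_reals.
From mathcomp Require Import ereal sequences exp.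
From mathcomp Require Import zify lra.
Set Implicit Arguments. Unset Strict Implicit. Unset Printing Implicit Defensive.
Import Order.TTheory GRing.Theory Num.Theory.
Local Open Scope ring_scope.

(** Let u be a vertex of highest level l(u) = j on the path x..f, chosen outside D
    (possible since l(f) <= l(x)).  The segment u..f then avoids U_(j+1), so the
    cover T_(U_(j+1))(U_j) has a tree T(w) containing u and f with
    dep(u) + dep(f) <= (2k-1)|u..f|.  Climb in T from u towards the root w: if a
    failed vertex g is met, the vertex just before it is a trunk child of g (it lies
    on the T-path between u and w, both in U_j \ U_(j+1)), hence in N(g); otherwise
    the root is reached, and descending towards f we stop at the parent of the
    deepest failed ancestor of f.  Either way some w' in V(H) is reached from u in
    G - D within dep(u) + dep(f), and prepending x..u costs |x..u| <= (2k-1)|x..u|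
    since k >= 1 for n >= 3. *)

Lemma expR1_le3 (R : realType) : expR (1 : R) <= 3.
Proof.
(* e^(-1) = (e^(-1/6))^6 >= (5/6)^6 > 1/3 *)
have a_ge : 5 / 6 <= expR (- (1 / 6) : R) by have := expR_ge1Dx (- (1 / 6) : R); lra.
have e6 : expR (-1 : R) = expR (- (1 / 6)) ^+ 6.
  by rewrite -expRM_natl; congr expR; lra.
have c_le : (5 / 6) ^+ 6 <= expR (-1 : R).
  by rewrite e6 ler_pXn2r // nnegrE; [lra | exact: le_trans a_ge].
have c_ge : 1 / 3 <= (5 / 6 : R) ^+ 6 by rewrite !exprS expr0; lra.
have e_ge0 := expR_ge0 (1 : R).
have := ler_wpM2l e_ge0 (le_trans c_ge c_le).
rewrite /= expRxMexpNx_1; lra.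
Qed.

Lemma kk_ge1 (R : realType) (V : finType) : (3 <= #|V|)%N -> 1 <= kk R V.
Proof.
move=> V_ge3; rewrite /kk -[leLHS](expRK 1) ler_ln ?posrE ?expR_gt0 ?ltr0n //; last lia.
by apply: le_trans (expR1_le3 R) _; rewrite (ler_nat R 3).
Qed.

Lemma path_traject (T : Type) (e : rel T) (f : T -> T) x n :
  (forall i, (i < n)%N -> e (iter i f x) (iter i.+1 f x)) ->
  path e x (traject f (f x) n).
Proof.
elim: n x => [|n IHn] x //= step; rewrite (step 0%N) //=.
by apply: IHn => i lt_in; rewrite -!iterSr; apply: step.
Qed.

Lemma find_iota_least (P : pred nat) n m : (n < m)%N -> P n ->
  (forall i, (i < n)%N -> ~~ P i) -> find P (iota 0 m) = n.
Proof.
move=> lt_nm Pn before_n.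
rewrite -(subnKC (ltnW lt_nm)) -(subnSK lt_nm) iotaD find_cat size_iota /= add0n Pn.
by rewrite ifF ?addn0 //; apply/hasPn => i; rewrite mem_iota => /before_n.
Qed.

Section Walks.
Variables (R : realType) (V : finType) (E : rel V) (wt : V -> V -> R).

Lemma wlen_cat u p q : wlen wt u (p ++ q) = wlen wt u p + wlen wt (last u p) q.
Proof. by elim: p u => [|v p IHp] u /=; rewrite ?add0r // IHp addrA. Qed.

Lemma wlen_ge0 u p : (forall a b, E a b -> 0 <= wt a b) ->
  path E u p -> 0 <= wlen wt u p.
Proof.
move=> wt_ge0; elim: p u => [|v p IHp] u //= /andP[uv vp].
by rewrite addr_ge0 ?wt_ge0 ?IHp.
Qed.

Lemma wlen_traject (f : V -> V) x n :
  wlen wt x (traject f (f x) n) = \sum_(i < n) wt (iter i f x) (iter i.+1 f x).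
Proof.
elim: n x => [|n IHn] x /=; first by rewrite big_ord0.
rewrite IHn big_ord_recl; congr (_ + _).
by apply: eq_bigr => i _; rewrite lift0 [in RHS]iterSr.
Qed.

Lemma walk_cat Rm a b c p q : walk_in E Rm a b p -> walk_in E Rm b c q ->
  walk_in E Rm a c (p ++ q).
Proof.
move=> [ap lp alp] [bq lq alq]; split.
- by rewrite cat_path ap lp bq.
- by rewrite last_cat lp.
- by rewrite -cat_cons all_cat alp; case/andP: alq.
Qed.

Lemma last_rev_belast (a : V) p : last (last a p) (rev (belast a p)) = a.
Proof.
have rev_walk : last a p :: rev (belast a p) = rev (a :: p).
  by rewrite [a :: p]lastI rev_rcons.
by have := congr1 (last a) rev_walk; rewrite /= => ->; rewrite rev_cons last_rcons.
Qed.

Lemma walk_sym Rm a b p : symmetric E -> (forall u v, wt u v = wt v u) ->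
  walk_in E Rm a b p -> exists2 q, walk_in E Rm b a q & wlen wt b q = wlen wt a p.
Proof.
move=> E_sym wt_sym [ap <- alp]; exists (rev (belast a p)); last first.
  elim: p a {ap alp} => [|v p IHp] a //=.
  by rewrite rev_cons -cats1 wlen_cat IHp last_rev_belast /= addr0 addrC wt_sym.
split.
- by rewrite rev_path (eq_path (e' := E)) // => u v; exact: E_sym.
- exact: last_rev_belast.
- by rewrite -rev_rcons -lastI all_rev.
Qed.

Lemma dist_le_wlen Rm a b p : walk_in E Rm a b p ->
  (dist E wt Rm a b <= (wlen wt a p)%:E)%E.
Proof. by move=> abp; apply: ereal_inf_lbound; exists p. Qed.

Lemma spath_split (Rm A B : {set V}) x f P u :
  spath_in E Rm x f P -> u \in x :: P -> u != f ->
  {in x :: P, forall z, z \in A -> z = f} -> {in x :: P, forall z, z \notin B} ->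
  exists P1 P2, [/\ walk_in E A x u P1, walk_in E B u f P2
                   & wlen wt x P = wlen wt x P1 + wlen wt u P2].
Proof.
move=> [[xP lastP _] uniqP] uP uf.
case/splitPl: uP xP lastP uniqP => P1 P2 lastP1.
rewrite cat_path last_cat lastP1 -cat_cons cat_uniq.
move=> /andP[xP1 uP2] lastP2 /and3P[_ disjP _] onlyf avoidB.
have fP2 : f \in P2.
  by move: (mem_last u P2); rewrite lastP2 inE eq_sym (negbTE uf).
have fP1 : f \notin x :: P1 by apply: contraNN disjP => fP1; apply/hasP; exists f.
exists P1, P2; split; last by rewrite wlen_cat lastP1.
- split => //; apply/allP => z zP1; apply: contraNN fP1 => zA.
  by rewrite -(onlyf z _ zA) // mem_cat zP1.
- split => //; apply/allP => z; rewrite inE => /predU1P[-> | zP2].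
    by apply: avoidB; rewrite mem_cat -lastP1 mem_last.
  by apply: avoidB; rewrite mem_cat zP2 orbT.
Qed.

End Walks.

Section RootedTree.
Variables (R : realType) (V : finType) (E : rel V) (wt : V -> V -> R).
Variables (Rm : {set V}) (w : V) (T : rtree V).
Hypothesis T_sub : is_subtree E Rm w T.
Hypothesis wt_ge0 : forall a b, E a b -> 0 <= wt a b.
Hypothesis E_sym : symmetric E.
Hypothesis wt_sym : forall a b, wt a b = wt b a.
Local Notation par := (tpar T).
Local Notation hgt := (hgt T).

Lemma troot_eq : troot T = w.
Proof. by case: T_sub. Qed.

Lemma root_in_tree : w \in tv T.
Proof. by case: T_sub. Qed.

Lemma par_edge v : v \in tv T -> v != w -> par v \in tv T /\ E v (par v).
Proof. by case: T_sub => _ _ _ + _; apply. Qed.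

Lemma hgt_spec v : v \in tv T ->
  iter (hgt v) par v = w /\ forall i, (i < hgt v)%N -> iter i par v != w.
Proof.
move=> vT; have ex_w : exists n, iter n par v == w.
  by case: T_sub => _ _ _ _ /(_ v vT)[n <-]; exists n.
have [n /eqP nw n_min] := ex_minnP ex_w.
have before_n i : (i < n)%N -> iter i par v != w.
  by move=> lt_in; apply/negP => /n_min; rewrite leqNgt lt_in.
have uniq_n : uniq (traject par v n.+1).
  rewrite looping_uniq; apply/trajectP => -[i lt_in]; rewrite nw => wi.
  by move: (before_n i lt_in); rewrite -wi eqxx.
(* the trajectory up to the root is duplicate-free, hence shorter than #|V| *)
have lt_n : (n < #|V|)%N.
  by move/card_uniqP: uniq_n; rewrite size_traject => <-; exact: max_card.
suff -> : hgt v = n by [].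
by apply: find_iota_least => // [|i /before_n]; rewrite troot_eq ?nw.
Qed.

Lemma hgt_unique v n : v \in tv T -> iter n par v = w ->
  (forall i, (i < n)%N -> iter i par v != w) -> hgt v = n.
Proof.
move=> vT nw before_n; have [hw before_h] := hgt_spec vT.
case: (ltngtP (hgt v) n) => // [/before_n | /before_h]; by rewrite ?hw ?nw eqxx.
Qed.

Lemma iter_par_in v i : v \in tv T -> (i <= hgt v)%N -> iter i par v \in tv T.
Proof.
move=> vT; have [_ before_h] := hgt_spec vT.
elim: i => // i IHi lt_ih; rewrite iterS.
by case: (par_edge (IHi (ltnW lt_ih)) (before_h i lt_ih)).
Qed.

Lemma iter_par_edge v i : v \in tv T -> (i < hgt v)%N ->
  E (iter i par v) (iter i.+1 par v).
Proof.
move=> vT lt_ih; have [_ before_h] := hgt_spec vT.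
by case: (par_edge (iter_par_in vT (ltnW lt_ih)) (before_h i lt_ih)).
Qed.

Lemma hgt_iter v a : v \in tv T -> (a <= hgt v)%N ->
  hgt (iter a par v) = (hgt v - a)%N.
Proof.
move=> vT le_ah; have [hw before_h] := hgt_spec vT.
apply: hgt_unique; first exact: iter_par_in.
  by rewrite -iterD subnK.
by move=> i lt_i; rewrite -iterD before_h //; lia.
Qed.

Lemma dep_ge0 v : v \in tv T -> 0 <= dep wt T v.
Proof.
by move=> vT; apply: sumr_ge0 => i _; exact: wt_ge0 (iter_par_edge vT (ltn_ord i)).
Qed.

Lemma dep_wlen v : dep wt T v = wlen wt v (traject par (par v) (hgt v)).
Proof. by rewrite wlen_traject. Qed.

Lemma dep_iter v a : v \in tv T -> (a <= hgt v)%N ->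
  dep wt T v = wlen wt v (traject par (par v) a) + dep wt T (iter a par v).
Proof.
move=> vT le_ah; rewrite !dep_wlen hgt_iter // -{1}(subnKC le_ah) trajectD.
by rewrite wlen_cat last_traject -iterSr iterS.
Qed.

Lemma path_ancestors (e : rel V) v a : v \in tv T -> (a <= hgt v)%N ->
  {in tv T, forall y, y != w -> e y (par y)} -> path e v (traject par (par v) a).
Proof.
move=> vT le_ah e_par; have [_ before_h] := hgt_spec vT.
apply: path_traject => i lt_ia; have lt_ih := leq_trans lt_ia le_ah.
by apply: e_par; [exact: iter_par_in (ltnW lt_ih) | exact: before_h].
Qed.

Lemma walk_to_ancestor (D : {set V}) v a : v \in tv T -> (a <= hgt v)%N ->
  (forall i, (i <= a)%N -> iter i par v \notin D) ->
  walk_in E D v (iter a par v) (traject par (par v) a).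
Proof.
move=> vT le_ah avoidD; split.
- by apply: path_ancestors => // y yT /(par_edge yT)[].
- exact: last_traject.
- by apply/allP => y; rewrite -trajectS => /trajectP[i lt_ia ->]; exact: avoidD.
Qed.

Lemma wlen_ancestors_le_dep v a : v \in tv T -> (a <= hgt v)%N ->
  wlen wt v (traject par (par v) a) <= dep wt T v.
Proof.
by move=> vT le_ah; rewrite (dep_iter vT le_ah) lerDl dep_ge0 ?iter_par_in.
Qed.

Lemma dep_iter_le v a : v \in tv T -> (a <= hgt v)%N ->
  dep wt T (iter a par v) <= dep wt T v.
Proof.
move=> vT le_ah; rewrite (dep_iter vT le_ah) lerDr; apply: wlen_ge0 wt_ge0 _.
by apply: path_ancestors => // y yT /(par_edge yT)[].
Qed.

Lemma trunk_ancestor (S : {set V}) u i : w \in S -> u \in S -> u \in tv T ->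
  (i <= hgt u)%N -> trunk S T (iter i par u).
Proof.
move=> wS uS uT le_ih; have [uw before_h] := hgt_spec uT.
apply/asboolP; exists u, w, (traject par (par u) (hgt u)); split.
- by rewrite uS wS uT root_in_tree.
- apply: path_ancestors => // y yT yw; have [pyT _] := par_edge yT yw.
  by rewrite /tadj yT pyT troot_eq yw eqxx.
- by rewrite last_traject.
- rewrite -trajectS looping_uniq; apply/trajectP => -[j lt_jh]; rewrite uw => wj.
  by move: (before_h j lt_jh); rewrite -wj eqxx.
- by rewrite -trajectS; apply/trajectP; exists i.
Qed.

Lemma walk_to_root (D : {set V}) v : v \in tv T ->
  (forall i, (i <= hgt v)%N -> iter i par v \notin D) ->
  walk_in E D v w (traject par (par v) (hgt v)).
Proof.
move=> vT avoidD; have [vw _] := hgt_spec vT.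
by rewrite -[in X in walk_in _ _ _ X]vw; exact: walk_to_ancestor.
Qed.

Lemma escape_to_trunk_child (S D : {set V}) u i : w \in S -> u \in S -> u \in tv T ->
  u \notin D -> (i <= hgt u)%N -> iter i par u \in D ->
  exists g y q, [/\ g \in D, g \in tv T, y \in NT S T g, walk_in E D u y q
                   & wlen wt u q <= dep wt T u].
Proof.
move=> wS uS uT uD le_ih iD; have [_ before_h] := hgt_spec uT.
have ex_D : exists m, (m <= hgt u)%N && (iter m par u \in D).
  by exists i; rewrite le_ih iD.
have [[|m] /andP[lt_mh mD] m_min] := ex_minnP ex_D; first by rewrite mD in uD.
have le_mh := ltnW lt_mh.
have avoidD j : (j <= m)%N -> iter j par u \notin D.
  move=> le_jm; apply/negP => jD; suff: (m < j)%N by rewrite ltnNge le_jm.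
  by apply: m_min; rewrite jD andbT (leq_trans le_jm le_mh).
exists (iter m.+1 par u), (iter m par u), (traject par (par u) m); split => //.
- exact: iter_par_in.
- rewrite /NT inE; apply/orP; right.
  by rewrite inE iter_par_in // troot_eq before_h // eqxx trunk_ancestor.
- exact: walk_to_ancestor.
- exact: wlen_ancestors_le_dep.
Qed.

Lemma escape_to_parent (S D : {set V}) u f : u \in tv T -> f \in tv T -> f \in D ->
  (forall i, (i <= hgt u)%N -> iter i par u \notin D) ->
  exists g y q, [/\ g \in D, g \in tv T, y \in NT S T g, walk_in E D u y q
                   & wlen wt u q <= dep wt T u + dep wt T f].
Proof.
move=> uT fT fD avoid_u; have [uw _] := hgt_spec uT; have [fw _] := hgt_spec fT.
have wD : w \notin D by rewrite -uw avoid_u.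
have ex_D : exists m, (m <= hgt f)%N && (iter m par f \in D) by exists 0%N; rewrite fD.
have le_hgt i : (i <= hgt f)%N && (iter i par f \in D) -> (i <= hgt f)%N.
  by case/andP.
have [m /andP[le_mh mD] m_max] := ex_maxnP ex_D le_hgt.
have lt_mh : (m < hgt f)%N.
  by rewrite ltn_neqAle le_mh andbT; apply: contraNneq wD => mh; rewrite -fw -mh.
set y := iter m.+1 par f; have yT : y \in tv T by exact: iter_par_in.
have avoid_y i : (i <= hgt y)%N -> iter i par y \notin D.
  rewrite hgt_iter // => le_i; apply/negP; rewrite /y -iterD => iD.
  have := m_max (i + m.+1)%N; rewrite iD andbT; lia.
have [q Wq len_q] := walk_sym E_sym wt_sym (walk_to_root yT avoid_y).
exists (iter m par f), y, (traject par (par u) (hgt u) ++ q); split => //.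
- exact: iter_par_in.
- rewrite /NT !inE troot_eq; apply/orP; left.
  by rewrite ifT ?inE //; apply: contraNneq wD => <-.
- exact: walk_cat (walk_to_root uT avoid_u) Wq.
- rewrite wlen_cat last_traject uw len_q -!dep_wlen lerD2l.
  exact: dep_iter_le.
Qed.

Lemma tree_escape (S D : {set V}) u f : w \in S -> u \in S -> u \in tv T ->
  f \in tv T -> u \notin D -> f \in D ->
  exists g y q, [/\ g \in D, g \in tv T, y \in NT S T g, walk_in E D u y q
                   & wlen wt u q <= dep wt T u + dep wt T f].
Proof.
move=> wS uS uT fT uD fD.
have [/existsP[i iD] | /existsPn avoid_u] :=
  boolP [exists i : 'I_(hgt u).+1, iter i par u \in D].
  have [g [y [q [gD gT yN Wq len_q]]]] := escape_to_trunk_child wS uS uT uD (ltn_ord i) iD.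
  by exists g, y, q; split => //; rewrite ler_wpDr ?dep_ge0.
by apply: escape_to_parent => // i le_ih; exact: avoid_u (@Ordinal (hgt u).+1 i le_ih).
Qed.

End RootedTree.

Lemma tree_cover_walk (R : realType) (V : finType) (E : rel V) (wt : V -> V -> R)
    (Rm S : {set V}) (C : V -> rtree V) u v q :
  tree_cover E wt Rm S C -> 0 <= 2 * kk R V - 1 -> u \in S -> walk_in E Rm u v q ->
  exists2 w, w \in S & [/\ is_subtree E Rm w (C w), u \in tv (C w), v \in tv (C w)
    & dep wt (C w) u + dep wt (C w) v <= (2 * kk R V - 1) * wlen wt u q].
Proof.
move=> [C_sub C_pair _] k_ge uS uvq.
have vRm : v \notin Rm by case: uvq => _ <- /allP; apply; exact: mem_last.
have d_le := dist_le_wlen wt uvq.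
have [w wS [uT vT dep_le]] := C_pair u v uS vRm (le_lt_trans d_le (ltry _)).
exists w => //; split => //; first exact: C_sub.
rewrite -lee_fin EFinM; apply: le_trans dep_le _.
by apply: lee_wpmul2l; rewrite ?lee_fin.
Qed.

Section Levels.
Variables (V : finType) (U : nat -> {set V}) (p : nat).
Hypotheses (p_gt0 : (1 <= p)%N) (U1 : U 1%N = [set: V]) (Up1 : U p.+1 = finset.set0).

Lemma leq_lvl v l : (1 <= l <= p)%N -> v \in U l -> (l <= lvl U p v)%N.
Proof.
move=> l_range vl; apply: (@leq_bigmax_seq _ _ _ id l) => //.
by rewrite mem_index_iota ltnS.
Qed.

Lemma lvl_spec v : [/\ (1 <= lvl U p v)%N, (lvl U p v <= p)%N & v \in U (lvl U p v)].
Proof.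
have lvl_ge1 : (1 <= lvl U p v)%N by apply: leq_lvl; rewrite ?p_gt0 ?U1 ?inE.
suff /orP[/eqP lvl0 | /andP[]] :
    (lvl U p v == 0)%N || ((lvl U p v <= p)%N && (v \in U (lvl U p v))).
- by rewrite lvl0 in lvl_ge1.
- by [].
rewrite /lvl big_seq_cond.
apply: (big_ind (fun n => (n == 0)%N || ((n <= p)%N && (v \in U n)))) => //.
- by move=> a b Ha Hb; rewrite /maxn; case: ifP.
- by move=> l /andP[]; rewrite mem_index_iota ltnS => /andP[_ ->] ->; rewrite orbT.
Qed.

Lemma notin_U_above v j : (lvl U p v <= j <= p)%N -> v \notin U j.+1.
Proof.
case/andP=> le_vj le_jp; apply/negP => vU.
have [lt_jp | le_pj] := ltnP j p.
  have : (j.+1 <= lvl U p v)%N by apply: leq_lvl vU; rewrite lt_jp.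
  by rewrite ltnNge le_vj.
have eq_jp : j = p by apply/eqP; rewrite eqn_leq le_jp le_pj.
by rewrite eq_jp Up1 inE in vU.
Qed.

End Levels.

Lemma mem_VH_NT (V : finType) (TC : {set V} -> {set V} -> V -> rtree V)
    (U : nat -> {set V}) (p : nat) (D : {set V}) (s0 t0 g w y : V) (i : nat) :
  g \in D -> (1 <= i <= p)%N -> w \in U i :\: U i.+1 ->
  g \in tv (TC (U i.+1) (U i) w) -> y \in NT (U i :\: U i.+1) (TC (U i.+1) (U i) w) g ->
  y \notin D -> y \in VH TC U p D s0 t0.
Proof.
move=> gD /andP[i_ge1 le_ip] wU gT yN yD.
rewrite /VH inE yD !inE; apply/orP; right; apply/bigcupP; exists g => //.
apply/bigcupP; exists (@Ordinal p.+1 i le_ip) => //.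
by apply/bigcupP; exists w; rewrite ?wU.
Qed.

Lemma exists_argmax_avoid (T : finType) (F : T -> nat) (A : pred T) x (s : seq T) :
  ~~ A x -> {in x :: s, forall z, A z -> (F z <= F x)%N} ->
  exists2 u, u \in x :: s & ~~ A u /\ {in x :: s, forall z, (F z <= F u)%N}.
Proof.
move=> Ax A_le; have [u us u_max] := arg_maxnP F (mem_head x s).
have [Au | nAu] := boolP (A u); last by exists u.
exists x; first exact: mem_head.
by split=> // z zs; exact: leq_trans (u_max z zs) (A_le u us Au).
Qed.

Theorem lemma3p5 (R : realType) (V : finType) (E : rel V)
  (wt : V -> V -> R) (Wmax : R) (d : nat) (c : R)
  (TC : {set V} -> {set V} -> V -> rtree V)
  (p : nat) (U : nat -> {set V}) (D : {set V}) (s0 t0 f x : V) (P : seq V) :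
  (3 <= #|V|)%N ->
  symmetric E -> irreflexive E ->
  (forall u v, wt u v = wt v u) ->
  (forall u v, E u v -> 1 <= wt u v <= Wmax) ->
  (* shortest paths in every subgraph G - Rm are unique *)
  (forall (Rm : {set V}) (u v : V) (p1 p2 : seq V),
     spath_in E Rm u v p1 -> spath_in E Rm u v p2 ->
     (wlen wt u p1)%:E = dist E wt Rm u v ->
     (wlen wt u p2)%:E = dist E wt Rm u v -> p1 = p2) ->
  (2 <= d)%N -> 1 <= c ->
  (* the fixed tree covers: T_Rm(S) is an (S \ Rm)-restricted cover of G - Rm *)
  (forall Rm S : {set V}, tree_cover E wt Rm (S :\: Rm) (TC Rm S)) ->
  (* a root-to-node path U_1 = V, ..., U_p in the hierarchy tree *)
  (1 <= p)%N -> U 1%N = [set: V] ->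
  (forall i, (1 <= i < p)%N -> hchild (sth V d c) TC d (U i) (U i.+1)) ->
  U p.+1 = finset.set0 ->
  (* the failed set D *)
  (#|D| <= d)%N ->
  (forall g i w, g \in D -> (1 <= i <= p)%N -> w \in U i :\: U i.+1 ->
     (pdeg (U i :\: U i.+1) (TC (U i.+1) (U i) w) g)%:R <= sth V d c) ->
  s0 \notin D -> t0 \notin D ->
  f \in D -> x \notin D ->
  (lvl U p f <= lvl U p x)%N ->
  (* P is a path in G from x to f containing no vertex of D other than f *)
  spath_in E finset.set0 x f P ->
  (forall y, y \in x :: P -> y \in D -> y = f) ->
  exists2 w, w \in VH TC U p D s0 t0 &
    (dist E wt D x w <= ((2 * kk R V - 1) * wlen wt x P)%:E)%E.
Proof.
move=> V_ge3 E_sym _ wt_sym wt_bnd _ _ _ cover p_gt0 U1 _ Up1 _ _ _ _ fD xD lvl_fx P_spath onlyf.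
have wt_ge0 a b : E a b -> 0 <= wt a b by move=> /wt_bnd/andP[/(le_trans ler01)].
have k_ge1 := kk_ge1 R V_ge3.
have k_ge : 0 <= 2 * kk R V - 1 by lra.
have [u uP [uD u_max]] : exists2 u, u \in x :: P &
    u \notin D /\ {in x :: P, forall z, (lvl U p z <= lvl U p u)%N}.
  by apply: exists_argmax_avoid xD _ => z zP zD; rewrite (onlyf z zP zD).
have [j_ge1 le_jp uUj] := lvl_spec p_gt0 U1 u.
have above z : z \in x :: P -> z \notin U (lvl U p u).+1.
  by move=> zP; apply: (notin_U_above Up1); rewrite u_max.
have uf : u != f by apply: contraNneq uD => ->.
have [P1 [P2 [W1 W2 lenP]]] := spath_split wt P_spath uP uf onlyf above.
have uS : u \in U (lvl U p u) :\: U (lvl U p u).+1 by rewrite inE above ?uUj.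
have [w0 w0S [T_sub uT fT dep_le]] := tree_cover_walk (cover _ _) k_ge uS W2.
have [g [y [q [gD gT yN Wq len_q]]]] :=
  tree_escape T_sub wt_ge0 E_sym wt_sym w0S uS uT fT uD fD.
exists y.
  apply: mem_VH_NT gD _ w0S gT yN _; first by rewrite j_ge1 le_jp.
  by case: Wq => _ <- /allP; apply; exact: mem_last.
apply: le_trans (dist_le_wlen wt (walk_cat W1 Wq)) _.
rewrite lee_fin wlen_cat lenP; case: W1 W2 => xP1 -> _ [uP2 _ _].
have := wlen_ge0 wt_ge0 xP1; have := wlen_ge0 wt_ge0 uP2; nra.
Qed.
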